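(* Let $\Bbbk$ be a field with $\operatorname{char}\Bbbk\ne2$, let $X$ be a linearly ordered set, and let $\Lambda_X=\mathrm{DiAs}\langle X\rangle/I$, where $I$ is the ideal generated by $\{x\dashv y+y\vdash x: x,y\in X\}$. Then the images of the words $\dot x_1x_2\cdots x_k$ with $k\ge1$, $x_i\in X$, $x_2<x_3<\dots<x_k$ form a linear basis of $\Lambda_X$.
   Context: An associative dialgebra is a vector space with bilinear operations $\vdash,\dashv$ satisfying $(x\dashv y)\vdash z=(x\vdash y)\vdash z$, $x\dashv(y\vdash z)=x\dashv(y\dashv z)$, $(x\vdash y)\vdash z=x\vdash(y\vdash z)$, $(x\dashv y)\dashv z=x\dashv(y\dashv z)$, $(x\vdash y)\dashv z=x\vdash(y\dashv z)$. $\mathrm{DiAs}\langle X\rangle$ is the free associative dialgebra on $X$, with basis the words $x_1\cdots\dot x_k\cdots x_n$ meaning $x_1\vdash\cdots\vdash x_{k-1}\vdash x_k\dashv x_{k+1}\dashv\cdots\dashv x_n$; thus $\dot x_1x_2\cdots x_k=x_1\dashv x_2\dashv\cdots\dashv x_k$. *)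

From HB Require Import structures.
From mathcomp Require Import all_boot all_order all_algebra.
Set Implicit Arguments. Unset Strict Implicit. Unset Printing Implicit Defensive.
Import Order.TTheory GRing.Theory.

(* A basis word  x_1 ... \dot x_m ... x_n  is the pair (s, m-1) where
   s = [:: x_1; ...; x_n] and the marked position m-1 < size s. *)
Section DiAs.
Variable (k : fieldType) (d : Order.disp_t) (X : orderType d).

Definition word := (seq X * nat)%type.

Definition valid_word (w : word) : bool := w.2 < size w.1.

(* u |- v : the centre is the centre of v;  u -| v : the centre is that of u *)
Definition wvdash (u v : word) : word := (u.1 ++ v.1, size u.1 + v.2).
Definition wdashv (u v : word) : word := (u.1 ++ v.1, u.2).

(* An element of DiAs<X>: a formal finite linear combination of words,
   identified up to equality of coefficient functions. *)
Definition lc := seq (k * word).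

Definition coef (a : lc) (w : word) : k :=
  (\sum_(p <- a | p.2 == w) p.1)%R.

Definition lc_scale (c : k) (a : lc) : lc := [seq (c * p.1, p.2)%R | p <- a].

Definition lc_vdash (a b : lc) : lc :=
  [seq ((p.1 * q.1)%R, wvdash p.2 q.2) | p <- a, q <- b].
Definition lc_dashv (a b : lc) : lc :=
  [seq ((p.1 * q.1)%R, wdashv p.2 q.2) | p <- a, q <- b].

Definition letter (x : X) : word := ([:: x], 0%N).

Definition gen_rel (x y : X) : lc :=
  [:: (1%R, wdashv (letter x) (letter y)); (1%R, wvdash (letter y) (letter x))].

(* I = the (two-sided) dialgebra ideal generated by the gen_rel x y:
   the smallest subspace containing them and stable under |- and -| by
   arbitrary elements on both sides (by bilinearity, basis words suffice). *)
Inductive inI : lc -> Prop :=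
| inI_gen x y : inI (gen_rel x y)
| inI_add a b : inI a -> inI b -> inI (a ++ b)
| inI_scale c a : inI a -> inI (lc_scale c a)
| inI_vdash_l w a : valid_word w -> inI a -> inI (lc_vdash [:: (1%R, w)] a)
| inI_vdash_r w a : valid_word w -> inI a -> inI (lc_vdash a [:: (1%R, w)])
| inI_dashv_l w a : valid_word w -> inI a -> inI (lc_dashv [:: (1%R, w)] a)
| inI_dashv_r w a : valid_word w -> inI a -> inI (lc_dashv a [:: (1%R, w)])
| inI_coef a b : inI a -> coef a =1 coef b -> inI b.

Definition basic_word (w : word) : bool :=
  if w.1 is _ :: s then (w.2 == 0%N) && sorted (fun x y : X => (x < y)%O) s
  else false.

End DiAs.

From mathcomp Require Import all_boot all_order all_algebra.
From mathcomp Require Import ring.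
Set Implicit Arguments. Unset Strict Implicit. Unset Printing Implicit Defensive.
Import Order.TTheory GRing.Theory.
Local Open Scope ring_scope.

(* Independence: if F : X -> seq X -> k is alternating in its list argument,
   the linear form sending the word with centre y, left part A and right part
   B to (-1)^|A| F y (A ++ B) vanishes on I.  The sign absorbs the generator
   x -| y + y |- x, and multiplying by a word on either side turns such a form
   into another one of the same kind.  For F the Kronecker delta at x0 times
   the sign of the permutation sorting the list into S, this form is dual to
   the basic word x0 S.
   Spanning: the generator moves the centre one step left at the cost of a
   sign, so every word is congruent to +- a word centred at the front.  To the
   right of the centre letters anticommute, and squares vanish when 2 != 0
   because -| forgets the centre of its right factor; so the tail can be
   sorted. *)

Section Dialgebra.
Variables (k : fieldType) (d : Order.disp_t) (X : orderType d).
Local Notation word := (word X).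
Local Notation lc := (lc k X).
Local Notation ltX := (fun x y : X => (x < y)%O).
Local Notation basic_lc := (all (fun p : k * word => basic_word p.2)).

Definition eval_lc (h : word -> k) (a : lc) : k := \sum_(p <- a) p.1 * h p.2.

Lemma eval_lc_nil h : eval_lc h [::] = 0.
Proof. by rewrite /eval_lc big_nil. Qed.

Lemma eval_lc_cons h p a : eval_lc h (p :: a) = p.1 * h p.2 + eval_lc h a.
Proof. by rewrite /eval_lc big_cons. Qed.

Lemma eval_lc_cat h a b : eval_lc h (a ++ b) = eval_lc h a + eval_lc h b.
Proof. by rewrite /eval_lc big_cat. Qed.

Lemma eval_lc_scale h c a : eval_lc h (lc_scale c a) = c * eval_lc h a.
Proof.
by rewrite /eval_lc big_map mulr_sumr; apply: eq_bigr => p _; rewrite mulrA.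
Qed.

Lemma coef_eval_lc a u : coef a u = eval_lc (fun v => (v == u)%:R) a.
Proof.
rewrite /coef /eval_lc big_mkcond; apply: eq_bigr => p _ /=.
by case: (p.2 == u); rewrite ?mulr1 ?mulr0.
Qed.

Lemma eval_lc_map h (g : k -> k) (f : word -> word) a : g =1 id ->
  eval_lc h [seq (g p.1, f p.2) | p <- a] = eval_lc (h \o f) a.
Proof.
by move=> gid; rewrite /eval_lc big_map; apply: eq_bigr => p _; rewrite gid.
Qed.

Lemma eval_lc_vdashl w h a :
  eval_lc h (lc_vdash [:: (1, w)] a) = eval_lc (fun v => h (wvdash w v)) a.
Proof.
rewrite /lc_vdash allpairs1l.
by apply: (eval_lc_map _ (g := fun c => 1 * c)); exact: mul1r.
Qed.

Lemma eval_lc_dashvl w h a :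
  eval_lc h (lc_dashv [:: (1, w)] a) = eval_lc (fun v => h (wdashv w v)) a.
Proof.
rewrite /lc_dashv allpairs1l.
by apply: (eval_lc_map _ (g := fun c => 1 * c)); exact: mul1r.
Qed.

Lemma eval_lc_vdashr w h a :
  eval_lc h (lc_vdash a [:: (1, w)]) = eval_lc (fun v => h (wvdash v w)) a.
Proof.
rewrite /lc_vdash allpairs1r.
by apply: (eval_lc_map _ (g := fun c => c * 1)); exact: mulr1.
Qed.

Lemma eval_lc_dashvr w h a :
  eval_lc h (lc_dashv a [:: (1, w)]) = eval_lc (fun v => h (wdashv v w)) a.
Proof.
rewrite /lc_dashv allpairs1r.
by apply: (eval_lc_map _ (g := fun c => c * 1)); exact: mulr1.
Qed.

Lemma eval_lc_coef h a (s : seq word) :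
  uniq s -> {subset [seq p.2 | p <- a] <= s} ->
  eval_lc h a = \sum_(u <- s) coef a u * h u.
Proof.
move=> us; elim: a => [|p a IHa] sub_a.
  by rewrite eval_lc_nil big1 // => u _; rewrite /coef big_nil mul0r.
rewrite eval_lc_cons IHa; last by move=> u au; apply: sub_a; rewrite inE au orbT.
have ps : p.2 \in s by apply: sub_a; rewrite inE eqxx.
rewrite [RHS](eq_bigr (fun u =>
    (if p.2 == u then p.1 * h u else 0) + coef a u * h u)); last first.
  by move=> u _; rewrite /coef big_cons; case: ifP; rewrite ?mulrDl ?add0r.
rewrite big_split /=; congr (_ + _).
rewrite (bigD1_seq p.2) //= eqxx big1 ?addr0 // => u /negbTE pu.
by rewrite eq_sym pu.
Qed.

Lemma eq_eval_lc_coef h a b : coef a =1 coef b -> eval_lc h a = eval_lc h b.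
Proof.
move=> eq_ab; set s := undup [seq p.2 | p <- a ++ b].
have [sa sb] : {subset [seq p.2 | p <- a] <= s} /\ {subset [seq p.2 | p <- b] <= s}.
  by split=> u; rewrite mem_undup map_cat mem_cat => ->; rewrite ?orbT.
rewrite (eval_lc_coef h (undup_uniq _) sa) (eval_lc_coef h (undup_uniq _) sb).
by apply: eq_bigr => u _; rewrite eq_ab.
Qed.

Definition valid_support (a : lc) := forall u, ~~ valid_word u -> coef a u = 0.

Lemma eq_eval_lc_valid (g g' : word -> k) a : valid_support a ->
  (forall v, valid_word v -> g v = g' v) -> eval_lc g a = eval_lc g' a.
Proof.
move=> va eq_g; set s := undup [seq p.2 | p <- a].
have sa : {subset [seq p.2 | p <- a] <= s} by move=> u; rewrite mem_undup.
rewrite (eval_lc_coef g (undup_uniq _) sa) (eval_lc_coef g' (undup_uniq _) sa).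
apply: eq_bigr => u _; have [/eq_g -> //|/va ->] := boolP (valid_word u).
by rewrite !mul0r.
Qed.

Definition alternating (F : X -> seq X -> k) :=
  forall x A y z B, F x (A ++ y :: z :: B) = - F x (A ++ z :: y :: B).

Definition alt_form (F : X -> seq X -> k) (w : word) : k :=
  if drop w.2 w.1 is y :: B then (-1) ^+ w.2 * F y (take w.2 w.1 ++ B) else 0.

Lemma alt_form_cat F A y B :
  alt_form F (A ++ y :: B, size A) = (-1) ^+ size A * F y (A ++ B).
Proof. by rewrite /alt_form /= drop_size_cat // take_size_cat. Qed.

Lemma valid_wordP (w : word) :
  valid_word w -> exists A y B, w = (A ++ y :: B, size A).
Proof.
case: w => [[//|x0 s] m]; rewrite /valid_word /= => ms.
exists (take m (x0 :: s)), (nth x0 (x0 :: s) m), (drop m.+1 (x0 :: s)).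
by rewrite -drop_nth // cat_take_drop size_take ms.
Qed.

Lemma alternating_move F : alternating F -> forall x P A y C,
  F x (P ++ A ++ y :: C) = (-1) ^+ size A * F x (P ++ y :: A ++ C).
Proof.
move=> altF x P A y C; elim: A P => [|a A IHA] P /=; first by rewrite expr0 mul1r.
by rewrite -cat_rcons IHA cat_rcons altF exprS mulrN mulN1r mulNr.
Qed.

Definition alt_stable (f : word -> word) := forall F, alternating F ->
  exists F', alternating F' /\
    forall v, valid_word v -> alt_form F (f v) = alt_form F' v.

Lemma alt_stable_dashvl w : valid_word w -> alt_stable (wdashv w).
Proof.
move=> /valid_wordP [A [y [B ->]]] F altF.
exists (fun z r => (-1) ^+ size A * F y ((A ++ B) ++ z :: r)); split.
  by move=> z E p q R; rewrite -!cat_cons !catA altF mulrN.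
move=> v /valid_wordP [C [z [D ->]]]; rewrite /wdashv /= -catA /= !alt_form_cat.
by rewrite catA alternating_move // mulrCA.
Qed.

Lemma alt_stable_dashvr w : valid_word w -> alt_stable (fun v => wdashv v w).
Proof.
move=> /valid_wordP [A [y [B ->]]] F altF.
exists (fun z r => F z (r ++ A ++ y :: B)); split.
  by move=> z E p q R /=; rewrite -!catA /= altF.
move=> v /valid_wordP [C [z [D ->]]].
by rewrite /wdashv /= -catA /= !alt_form_cat catA.
Qed.

Lemma alt_stable_vdashl w : valid_word w -> alt_stable (wvdash w).
Proof.
move=> /valid_wordP [A [y [B ->]]] F altF; set s := A ++ y :: B.
exists (fun z r => (-1) ^+ size s * F z (s ++ r)); split.
  by move=> z E p q R /=; rewrite !catA altF mulrN.
move=> v /valid_wordP [C [z [D ->]]]; rewrite /wvdash /= catA -size_cat.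
by rewrite !alt_form_cat size_cat exprD catA -mulrA [RHS]mulrCA.
Qed.

Lemma alt_stable_vdashr w : valid_word w -> alt_stable (fun v => wvdash v w).
Proof.
move=> /valid_wordP [A [y [B ->]]] F altF.
exists (fun z r => (-1) ^+ (size r + 1 + size A)%N * F y (z :: r ++ A ++ B)); split.
  move=> z E p q R /=; rewrite !size_cat /= -!catA /=.
  have := altF y (z :: E) p q (R ++ A ++ B); rewrite /= => ->; ring.
move=> v /valid_wordP [C [z [D ->]]]; rewrite /wvdash /=.
rewrite -[(_ + size A)%N](size_cat (C ++ z :: D) A) catA.
rewrite alt_form_cat alt_form_cat -!catA /=.
have := alternating_move altF y [::] C z (D ++ A ++ B); rewrite /= => ->.
rewrite !size_cat /= !exprD exprS size_cat exprD expr1 catA; ring.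
Qed.

Definition annihilated (a : lc) :=
  forall F, alternating F -> eval_lc (alt_form F) a = 0.

(* [alt_stable] only controls valid words, hence the [valid_support] part. *)
Definition alt_invariant (a : lc) := valid_support a /\ annihilated a.

Lemma alt_invariant_mul (f : word -> word) (a b : lc) :
  (forall v, valid_word v -> valid_word (f v)) -> alt_stable f ->
  (forall h, eval_lc h b = eval_lc (h \o f) a) ->
  alt_invariant a -> alt_invariant b.
Proof.
move=> fvalid fstable eval_b [va aa]; split.
  move=> u invalid_u.
  rewrite coef_eval_lc eval_b (@eq_eval_lc_valid _ (fun _ => 0)) //.
    by rewrite /eval_lc big1 // => p _; rewrite mulr0.
  move=> v /fvalid vfv /=.
  by have -> // : (f v == u) = false by apply: contraNF invalid_u => /eqP <-.
move=> F altF; have [F' [altF' eqF]] := fstable F altF.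
by rewrite eval_b (@eq_eval_lc_valid _ (alt_form F')) // aa.
Qed.

Lemma inI_alt_invariant a : inI a -> alt_invariant a.
Proof.
have valid_cat s (m : nat) t : (m < size s)%N -> (m < size (s ++ t))%N.
  by move=> ms; rewrite size_cat (leq_trans ms) // leq_addr.
elim => {a} [x y | a b _ [va aa] _ [vb ab] | c a _ [va aa] | w a vw _ |
             w a vw _ | w a vw _ | w a vw _ | a b _ [va aa] eq_ab].
- split=> [u invalid_u | F altF]; rewrite ?coef_eval_lc !eval_lc_cons eval_lc_nil.
    have ne_u v : valid_word v -> (v == u) = false.
      by move=> vv; apply: contraNF invalid_u => /eqP <-.
    by rewrite !ne_u // !mulr0n !mulr0 !addr0.
  by rewrite /alt_form /= addn0 expr0 expr1 !mul1r mulN1r addr0 subrr.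
- split=> [u invalid_u | F altF]; last by rewrite eval_lc_cat aa // ab // addr0.
  by rewrite coef_eval_lc eval_lc_cat -!coef_eval_lc va // vb // addr0.
- split=> [u invalid_u | F altF]; last by rewrite eval_lc_scale aa // mulr0.
  by rewrite coef_eval_lc eval_lc_scale -coef_eval_lc va // mulr0.
- apply: (alt_invariant_mul (f := wvdash w)) => [v||h]; last exact: eval_lc_vdashl.
    by rewrite /valid_word /= size_cat ltn_add2l.
  exact: alt_stable_vdashl.
- apply: (alt_invariant_mul (f := fun v => wvdash v w)) => [v _||h];
    last exact: eval_lc_vdashr.
    by rewrite /valid_word /= size_cat ltn_add2l.
  exact: alt_stable_vdashr.
- apply: (alt_invariant_mul (f := wdashv w)) => [v _||h]; last exact: eval_lc_dashvl.
    exact: valid_cat.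
  exact: alt_stable_dashvl.
- apply: (alt_invariant_mul (f := fun v => wdashv v w)) => [v vv||h];
    last exact: eval_lc_dashvr.
    exact: valid_cat.
  exact: alt_stable_dashvr.
- split=> [u invalid_u | F altF]; first by rewrite -eq_ab va.
  by rewrite -(eq_eval_lc_coef _ eq_ab) aa.
Qed.

Fixpoint inversions (r : seq X) : nat :=
  if r is a :: r' then (count (fun b => (b < a)%O) r' + inversions r')%N else 0%N.

Lemma inversions_sorted S : sorted ltX S -> inversions S = 0%N.
Proof.
rewrite lt_sorted_pairwise; elim: S => [|a S IHS] //= /andP [aS sS].
rewrite IHS // addn0; apply/eqP; rewrite -leqn0 leqNgt -has_count.
by apply/hasPn => b /(allP aS) /lt_gtF ->.
Qed.

Lemma perm_swap_adj (A : seq X) y z B :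
  perm_eq (A ++ y :: z :: B) (A ++ z :: y :: B).
Proof. by rewrite perm_cat2l; apply/permP => p /=; rewrite addnCA. Qed.

Lemma sign_inversions_swap A y z B : y != z ->
  (-1) ^+ inversions (A ++ y :: z :: B) =
  - (-1) ^+ inversions (A ++ z :: y :: B) :> k.
Proof.
move=> yz; elim: A => [|a A IHA] /=; last first.
  by rewrite !exprD IHA (permP (perm_swap_adj A y z B)) mulrN.
rewrite !exprD; case: (ltgtP y z) yz => [_ _|_ _|-> /eqP //] /=; ring.
Qed.

Definition dual_form (x0 : X) (S : seq X) (x : X) (r : seq X) : k :=
  (x == x0)%:R * (if perm_eq r S then (-1) ^+ inversions r else 0).

Lemma dual_form_alternating x0 S : uniq S -> alternating (dual_form x0 S).
Proof.
move=> uS x A y z B; rewrite /dual_form (permPl (perm_swap_adj A y z B)).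
case: ifP => [perm_S|_]; last by rewrite mulr0 oppr0.
have [eq_yz|yz] := eqVneq y z; last by rewrite sign_inversions_swap // mulrN.
by move: uS; rewrite -(perm_uniq perm_S) eq_yz cat_uniq /= inE eqxx !andbF.
Qed.

Lemma alt_form_dual_basic x0 S t : sorted ltX S -> basic_word t ->
  alt_form (dual_form x0 S) t = (t == (x0 :: S, 0%N))%:R.
Proof.
case: t => [[//|x S'] m] sS; rewrite /basic_word /= => /andP [/eqP -> sS'].
rewrite /alt_form /dual_form /= expr0 mul1r xpair_eqE /= andbT eqseq_cons.
have [_|_] /= := eqVneq x x0; last by rewrite mul0r.
rewrite mul1r; case: ifPn => [perm_S|]; last by case: eqP => // ->; rewrite perm_refl.
by rewrite (lt_sorted_eq sS' sS (perm_mem perm_S)) eqxx inversions_sorted ?mul1r.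
Qed.

Lemma basic_word_indep (a : lc) : basic_lc a -> inI a -> forall w, coef a w = 0.
Proof.
move=> basic_a /inI_alt_invariant [_ aa] w.
have [|nbasic_w] := boolP (basic_word w); last first.
  rewrite /coef big_seq_cond big1 // => p /andP [pa /eqP eq_w].
  by move: (allP basic_a p pa); rewrite eq_w (negbTE nbasic_w).
case: w => [[//|x0 S] m] /andP [/eqP /= -> sS].
have uS : uniq S by rewrite (sorted_uniq lt_trans ltxx sS).
rewrite coef_eval_lc -(aa _ (dual_form_alternating x0 uS)) /eval_lc.
by apply: eq_big_seq => p pa; rewrite alt_form_dual_basic // (allP basic_a p pa).
Qed.

Lemma inI_eval (a b : lc) :
  inI a -> (forall h, eval_lc h a = eval_lc h b) -> inI b.
Proof. by move=> Ia eq_ab; apply: (inI_coef Ia) => u; rewrite !coef_eval_lc eq_ab. Qed.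

Definition eqI (a b : lc) := inI (a ++ lc_scale (-1) b).

Lemma eqI_eval a b a' b' : eqI a b ->
  (forall h, eval_lc h a - eval_lc h b = eval_lc h a' - eval_lc h b') -> eqI a' b'.
Proof.
move=> Iab eq_h; apply: (inI_eval Iab) => h.
by rewrite !eval_lc_cat !eval_lc_scale !mulN1r.
Qed.

(* [inI] has no constructor for 0; it is obtained from a generator. *)
Lemma eqI_refl (x : X) a : eqI a a.
Proof.
apply: (inI_eval (inI_scale 0 (inI_gen k x x))) => h.
by rewrite eval_lc_cat !eval_lc_scale mul0r mulN1r subrr.
Qed.

Lemma eqI_trans a b c : eqI a b -> eqI b c -> eqI a c.
Proof.
move=> Iab Ibc; apply: (inI_eval (inI_add Iab Ibc)) => h.
by rewrite !eval_lc_cat !eval_lc_scale !mulN1r addrA subrK.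
Qed.

Lemma eqI_scale c a b : eqI a b -> eqI (lc_scale c a) (lc_scale c b).
Proof.
move=> Iab; apply: (inI_eval (inI_scale c Iab)) => h.
by rewrite !(eval_lc_cat, eval_lc_scale) !mulN1r mulrDr mulrN.
Qed.

Lemma eqI_chain u c v e : eqI [:: (1, u)] [:: (c, v)] -> eqI [:: (1, v)] e ->
  eqI [:: (1, u)] (lc_scale c e).
Proof.
move=> Iuv /(eqI_scale c) Ive; apply: eqI_trans Iuv (eqI_eval Ive _) => h.
by rewrite !eval_lc_cons !eval_lc_nil /= mulr1.
Qed.

Lemma inI_prepend v (a : lc) : inI a ->
  inI [seq (p.1, (v ++ p.2.1, size v + p.2.2)%N) | p <- a].
Proof.
case: v => [|y v] Ia.
  apply: (inI_eval Ia) => h; rewrite /eval_lc big_map.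
  by apply: eq_bigr => -[c [s m]].
apply: (inI_eval (inI_vdash_l (w := (y :: v, 0%N)) isT Ia)) => h.
by rewrite eval_lc_vdashl /eval_lc big_map; apply: eq_bigr => -[c [s m]].
Qed.

Lemma inI_append t (a : lc) : inI a -> inI [seq (p.1, (p.2.1 ++ t, p.2.2)) | p <- a].
Proof.
case: t => [|y t] Ia.
  apply: (inI_eval Ia) => h; rewrite /eval_lc big_map.
  by apply: eq_bigr => -[c [s m]] _; rewrite cats0.
apply: (inI_eval (inI_dashv_r (w := (y :: t, 0%N)) isT Ia)) => h.
by rewrite eval_lc_dashvr /eval_lc big_map; apply: eq_bigr => -[c [s m]].
Qed.

Lemma eqI_shift_centre v (x y : X) t :
  eqI [:: (1, (v ++ y :: x :: t, (size v).+1))] [:: (-1, (v ++ x :: y :: t, size v))].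
Proof.
apply: (inI_eval (inI_append t (inI_prepend v (inI_gen k x y)))) => h.
rewrite /= !eval_lc_cons eval_lc_nil /= -!catA /= addn0 addn1.
by rewrite mulN1r opprK !mul1r !addr0 addrC.
Qed.

Lemma eqI_swap_right s m (x y : X) t : (m < size s)%N ->
  eqI [:: (1, (s ++ x :: y :: t, m))] [:: (-1, (s ++ y :: x :: t, m))].
Proof.
move=> ms.
apply: (inI_eval (inI_append t (inI_dashv_l (w := (s, m)) ms (inI_gen k x y)))) => h.
by rewrite /= !eval_lc_cons eval_lc_nil /= -!catA /= mulN1r opprK !addr0 !mul1r.
Qed.

(* [s -| (x -| x + x |- x)] is twice the word: [-|] forgets the centre of its
   right factor. *)
Lemma eqI_square_right s m (x : X) t : 2%:R != 0 :> k -> (m < size s)%N ->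
  eqI [:: (1, (s ++ x :: x :: t, m))] [::].
Proof.
move=> two_neq0 ms.
have Ix := inI_append t (inI_dashv_l (w := (s, m)) ms (inI_gen k x x)).
apply: (inI_eval (inI_scale 2%:R^-1 Ix)) => h.
rewrite eval_lc_scale /= !eval_lc_cons !eval_lc_nil /= -!catA /=.
by rewrite !addr0 !mul1r -mulr2n -[X in _ * X]mulr_natl mulrA mulVf ?mul1r.
Qed.

Lemma eqI_centre_front v y t :
  eqI [:: (1, (v ++ y :: t, size v))] [:: ((-1) ^+ size v, (y :: v ++ t, 0%N))].
Proof.
elim/last_ind: v t => [|v a IHv] t; first exact: eqI_refl y _.
rewrite cat_rcons size_rcons.
apply: eqI_eval (eqI_chain (eqI_shift_centre v y a t) (IHv (a :: t))) _ => h.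
by rewrite !eval_lc_cons !eval_lc_nil /= cat_rcons exprS.
Qed.

Lemma pairwise_insert (P : seq X) z y Q :
  pairwise ltX (P ++ z :: Q) -> (z < y)%O -> all (fun q => (y < q)%O) Q ->
  pairwise ltX (P ++ z :: y :: Q).
Proof.
move=> + lt_zy yQ; elim: P => [|a P IHP] /=.
  by case/andP => zQ sQ; rewrite lt_zy zQ yQ sQ.
case/andP => aPzQ sPzQ; rewrite IHP // andbT.
move: aPzQ; rewrite !all_cat /= => /and3P [-> lt_az ->].
by rewrite lt_az (lt_trans lt_az lt_zy).
Qed.

Lemma eqI_insert x y P Q r : 2%:R != 0 :> k ->
  pairwise ltX (P ++ Q) -> all (fun q => (y < q)%O) Q ->
  exists c S, pairwise ltX S /\
    eqI [:: (1, (x :: P ++ y :: Q ++ r, 0%N))] [:: (c, (x :: S ++ r, 0%N))].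
Proof.
move=> two_neq0; elim/last_ind: P Q => [|P z IHP] Q sPQ yQ.
  by exists 1, (y :: Q); split; [rewrite /= yQ | exact: eqI_refl x _].
rewrite cat_rcons in sPQ; rewrite cat_rcons.
case: (ltgtP z y) => [lt_zy|lt_yz|<-].
- exists 1, (P ++ z :: y :: Q); split; first exact: pairwise_insert.
  by rewrite -catA; exact: eqI_refl x _.
- have [|c [S [sS IPS]]] := IHP (z :: Q) sPQ; first by rewrite /= lt_yz.
  exists (-1 * c), S; split => //.
  exact: eqI_chain (@eqI_swap_right (x :: P) 0 z y (Q ++ r) isT) IPS.
- exists 0, (P ++ z :: Q); split => //.
  apply: eqI_eval (@eqI_square_right (x :: P) 0 z (Q ++ r) two_neq0 isT) _ => h.
  by rewrite !eval_lc_cons !eval_lc_nil /= mul0r !(addr0, oppr0).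
Qed.

Lemma basic_lc_scale c b : basic_lc b -> basic_lc (lc_scale c b).
Proof. by rewrite all_map. Qed.

Lemma eqI_sort x r P : 2%:R != 0 :> k -> pairwise ltX P ->
  exists b : lc, basic_lc b /\ eqI [:: (1, (x :: P ++ r, 0%N))] b.
Proof.
move=> two_neq0; elim: r P => [|y r IHr] P sP.
  exists [:: (1, (x :: P, 0%N))]; rewrite cats0; split; last exact: eqI_refl x _.
  by rewrite /= /basic_word /= lt_sorted_pairwise sP.
have sP0 : pairwise ltX (P ++ [::]) by rewrite cats0.
have [c [S [sS IPS]]] := @eqI_insert x y P [::] r two_neq0 sP0 isT.
have [b [basic_b ISb]] := IHr S sS.
by exists (lc_scale c b); split; [exact: basic_lc_scale | exact: eqI_chain IPS ISb].
Qed.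

Lemma basic_word_span w : 2%:R != 0 :> k -> valid_word w ->
  exists b : lc, basic_lc b /\ eqI [:: (1, w)] b.
Proof.
move=> two_neq0 /valid_wordP [A [y [B ->]]].
have [b [basic_b Ib]] := @eqI_sort y (A ++ B) [::] two_neq0 isT.
exists (lc_scale ((-1) ^+ size A) b); split; first exact: basic_lc_scale.
exact: eqI_chain (eqI_centre_front A y B) Ib.
Qed.

End Dialgebra.

Theorem mainTheorem8 (k : fieldType) (d : Order.disp_t) (X : orderType d) :
  (2%:R != 0 :> k)%R ->
  (forall a : lc k X, all (fun p => basic_word p.2) a -> inI a ->
     forall w, coef a w = 0%R) /\
  (forall w : word X, valid_word w ->
     exists b : lc k X, all (fun p => basic_word p.2) b /\
       inI ((1%R, w) :: lc_scale (-1)%R b)).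
Proof.
move=> two_neq0; split; first exact: basic_word_indep.
by move=> w vw; exact: (basic_word_span two_neq0 vw).
Qed.
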